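(* Fix $q\in[1,\infty)$ and let $(\mathcal X,d)$ be a metric space with the $q$-barycenter property (for every $\boldsymbol w\in\Delta^{K-1}$ and $\boldsymbol c\in\mathcal X^K$, $C\mapsto\sum_sw_sd^q(c_s,C)$ attains its minimum). Let $\boldsymbol a=(a_1,\dots,a_K)\in\mathcal X^K$, $\boldsymbol w\in\Delta^{K-1}$, $\alpha\in[0,1]$, and $C_{\boldsymbol a}\in\arg\min_C\sum_sw_sd^q(a_s,C)$. Assume $\boldsymbol b=(b_1,\dots,b_K)\in\mathcal X^K$ satisfies, for all $s$, $d(a_s,C_{\boldsymbol a})=d(a_s,b_s)+d(b_s,C_{\boldsymbol a})$ and $d(b_s,a_s)=(1-\alpha^{1/q})d(a_s,C_{\boldsymbol a})$. Let $C_{\boldsymbol b}\in\arg\min_C\sum_sw_sd^q(b_s,C)$. Then $$\Big\{\sum_{s=1}^Kw_sd^q(b_s,C_{\boldsymbol b})\Big\}^{1/q}=\Big\{\sum_{s=1}^Kw_sd^q(b_s,C_{\boldsymbol a})\Big\}^{1/q}.$$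
   Context: $\Delta^{K-1}$ is the probability simplex in $\mathbb R^K$. *)

From mathcomp Require Import all_boot all_order all_algebra.
From mathcomp Require Import all_classical all_reals all_analysis.
Set Implicit Arguments. Unset Strict Implicit. Unset Printing Implicit Defensive.
Import Order.TTheory GRing.Theory Num.Theory.
Local Open Scope ring_scope.

Definition is_metric (R : realType) (X : Type) (d : X -> X -> R) : Prop :=
  [/\ forall x y, 0 <= d x y,
      forall x y, d x y = 0 <-> x = y,
      forall x y, d x y = d y x &
      forall x y z, d x z <= d x y + d y z].

Definition in_simplex (R : realType) (K : nat) (w : 'I_K -> R) : Prop :=
  (forall s, 0 <= w s) /\ \sum_(s < K) w s = 1.

Definition qcost (R : realType) (X : Type) (d : X -> X -> R) (q : R)
  (K : nat) (w : 'I_K -> R) (c : 'I_K -> X) (C : X) : R :=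
  \sum_(s < K) w s * powR (d (c s) C) q.

Definition is_qbarycenter (R : realType) (X : Type) (d : X -> X -> R) (q : R)
  (K : nat) (w : 'I_K -> R) (c : 'I_K -> X) (C : X) : Prop :=
  forall C', qcost d q w c C <= qcost d q w c C'.

Definition qbarycenter_property (R : realType) (X : Type) (d : X -> X -> R)
  (q : R) (K : nat) : Prop :=
  forall (w : 'I_K -> R) (c : 'I_K -> X), in_simplex w ->
    exists C, is_qbarycenter d q w c C.

From mathcomp Require Import all_boot all_order all_algebra.
From mathcomp Require Import all_classical all_reals all_analysis.
From mathcomp Require Import ring lra.
Import Order.TTheory GRing.Theory Num.Theory.
Local Open Scope ring_scope.

(* Put t = alpha^(1/q); then d(b_s, C_a) = t d(a_s, C_a) and
   d(a_s, b_s) = (1 - t) d(a_s, C_a). For any C, the triangle inequality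
   through b_s and convexity of x |-> x^q give
     t^q d^q(a_s, C) <= (1 - t) t^q d^q(a_s, C_a) + t d^q(b_s, C);
   summing with the weights and using the minimality of C_a yields
   t^q E_a(C_a) <= E_b(C), where E_c is the q-energy of c. Since
   E_b(C_a) = t^q E_a(C_a), the point C_a is itself a q-barycenter of b and
   so has the same energy as C_b. *)

Lemma powR_conv_le {R : realType} (p t x y : R) :
  1 <= p -> 0 <= t <= 1 -> 0 <= x -> 0 <= y ->
  powR (t * x + (1 - t) * y) p <= t * powR x p + (1 - t) * powR y p.
Proof.
move=> p1 /andP[t0 t1] x0 y0.
have := @convex_powR R p p1 (Itv01 t0 t1) x y.
by rewrite !inE /= !in_itv /= !andbT => /(_ x0 y0).
Qed.

Lemma powR_shrink_le {R : realType} (p t x y z : R) :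
  1 <= p -> 0 <= t <= 1 -> 0 <= x -> 0 <= y -> 0 <= z ->
  z <= (1 - t) * x + y ->
  powR (t * z) p <= (1 - t) * powR (t * x) p + t * powR y p.
Proof.
move=> p1 /andP[t0 t1] x0 y0 z0 hz.
(* t z <= (1 - t) (t x) + t y, a convex combination of t x and y. *)
have p0 : 0 <= p by apply: le_trans p1.
have t'01 : 0 <= 1 - t <= 1 by apply/andP; split; lra.
have := powR_conv_le p (1 - t) (t * x) y p1 t'01 (mulr_ge0 t0 x0) y0.
have -> : 1 - (1 - t) = t by ring.
apply: le_trans; apply: ge0_ler_powR; rewrite ?nnegrE ?mulr_ge0 //.
- by rewrite addr_ge0 ?mulr_ge0 //; lra.
- by rewrite mulrCA -mulrDr ler_wpM2l.
Qed.

Section QEnergy.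

Context {R : realType} {X : Type} {d : X -> X -> R} {q : R} {K : nat} {w : 'I_K -> R}.
Hypothesis hd : is_metric d.
Hypothesis hq : 1 <= q.
Hypothesis w_ge0 : forall s, 0 <= w s.

Let d_ge0 x y : 0 <= d x y. Proof. by case: hd. Qed.

Lemma qcost_ge0 (c : 'I_K -> X) (C : X) : 0 <= qcost d q w c C.
Proof. by rewrite sumr_ge0 // => s _; rewrite mulr_ge0 ?powR_ge0. Qed.

Lemma qcost_scale {a b : 'I_K -> X} {C : X} {t : R} : 0 <= t ->
  (forall s, d (b s) C = t * d (a s) C) ->
  qcost d q w b C = powR t q * qcost d q w a C.
Proof.
move=> t0 hb; rewrite /qcost mulr_sumr; apply: eq_bigr => s _.
by rewrite hb powRM // mulrCA.
Qed.

Lemma qcost_shrink_le {a b : 'I_K -> X} {Ca C : X} {t : R} : 0 <= t <= 1 ->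
  (forall s, d (a s) (b s) = (1 - t) * d (a s) Ca) ->
  powR t q * qcost d q w a C <=
    (1 - t) * (powR t q * qcost d q w a Ca) + t * qcost d q w b C.
Proof.
move=> t01 hab; have t0 : 0 <= t by case/andP: t01.
have [_ _ _ dtri] := hd.
have pointwise s : powR (t * d (a s) C) q <=
    (1 - t) * powR (t * d (a s) Ca) q + t * powR (d (b s) C) q.
  apply: powR_shrink_le => //; rewrite -hab; exact: dtri.
rewrite /qcost !mulr_sumr -big_split /=; apply: ler_sum => s _.
have := ler_wpM2l (w_ge0 s) (pointwise s).
by rewrite !powRM //; lra.
Qed.

Lemma qbarycenter_contract {a b : 'I_K -> X} {Ca : X} {t : R} : 0 <= t <= 1 ->
  (forall s, d (a s) (b s) = (1 - t) * d (a s) Ca) ->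
  (forall s, d (b s) Ca = t * d (a s) Ca) ->
  is_qbarycenter d q w a Ca -> is_qbarycenter d q w b Ca.
Proof.
move=> t01 hab hbC hCa C; have t0 : 0 <= t by case/andP: t01.
rewrite (qcost_scale t0 hbC).
have [->|t_neq0] := eqVneq t 0.
  by rewrite powR0 ?mul0r ?qcost_ge0 // gt_eqF // (lt_le_trans ltr01 hq).
have t_gt0 : 0 < t by rewrite lt0r t_neq0.
have shrink := qcost_shrink_le (C := C) t01 hab.
have min_a := ler_wpM2l (powR_ge0 t q) (hCa C).
rewrite -(ler_pM2l t_gt0); lra.
Qed.

End QEnergy.

Theorem lemma11 (R : realType) (X : Type) (d : X -> X -> R) (q : R) (K : nat)
  (hd : is_metric d) (hq : 1 <= q) (hbary : qbarycenter_property d q K)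
  (a b : 'I_K -> X) (w : 'I_K -> R) (alpha : R) (Ca Cb : X)
  (hw : in_simplex w) (halpha : 0 <= alpha <= 1)
  (hCa : is_qbarycenter d q w a Ca)
  (hgeo : forall s, d (a s) Ca = d (a s) (b s) + d (b s) Ca)
  (hdist : forall s, d (b s) (a s) = (1 - powR alpha q^-1) * d (a s) Ca)
  (hCb : is_qbarycenter d q w b Cb) :
  powR (qcost d q w b Cb) q^-1 = powR (qcost d q w b Ca) q^-1.
Proof.
have [_ _ dsym _] := hd; have [w_ge0 _] := hw.
have q_gt0 : 0 < q by apply: lt_le_trans hq.
set t := powR alpha q^-1.
have t_le1 : t <= powR 1 q^-1.
  case/andP: halpha => alpha_ge0 alpha_le1.
  by rewrite /t; apply: ge0_ler_powR; rewrite ?nnegrE ?invr_ge0 ?(ltW q_gt0).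
rewrite powR1 in t_le1.
have t01 : 0 <= t <= 1 by rewrite powR_ge0.
have hab s : d (a s) (b s) = (1 - t) * d (a s) Ca by rewrite dsym hdist.
have hbC s : d (b s) Ca = t * d (a s) Ca.
  by apply: (addrI (d (a s) (b s))); rewrite -hgeo hab; ring.
have hCab := qbarycenter_contract hd hq w_ge0 t01 hab hbC hCa.
by congr powR; apply/le_anti; rewrite hCb hCab.
Qed.
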